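(* Let $(\mathfrak{g},[-,-],(-,-))$ be a metric real Lie algebra and $(V,\langle-,-\rangle)$ a faithful real orthogonal representation of $\mathfrak{g}$, and let $T:V\times V\to\mathfrak{g}$ be defined by $(T(u,v),x)=\langle x\cdot u,v\rangle$. Then the 3-bracket $[u,v,w]=T(u,v)\cdot w$ on $V$ defines a real metric 3-Leibniz algebra with the symmetric inner product $\langle-,-\rangle$.
   Context: All vector spaces are finite-dimensional and real. A metric real Lie algebra has a nondegenerate symmetric ad-invariant bilinear form $(-,-)$ (any signature). A real orthogonal representation is a Lie algebra homomorphism $\mathfrak{g}\to\mathfrak{so}(V)$ with respect to a nondegenerate symmetric form $\langle-,-\rangle$; faithful means injective. A real metric 3-Leibniz algebra is a vector space with nondegenerate symmetric $\langle-,-\rangle$ and trilinear $[-,-,-]$ satisfying: fundamental identity $[x,y,[z,s,t]]=[[x,y,z],s,t]+[z,[x,y,s],t]+[z,s,[x,y,t]]$; unitarity $\langle[x,y,z],s\rangle+\langle z,[x,y,s]\rangle=0$; symmetry $\langle[x,y,z],s\rangle=\langle[z,s,x],y\rangle$. *)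

From HB Require Import structures.
From mathcomp Require Import all_boot all_order all_algebra.
From mathcomp Require Import reals.
Set Implicit Arguments. Unset Strict Implicit. Unset Printing Implicit Defensive.
Import Order.TTheory GRing.Theory Num.Theory.
Local Open Scope ring_scope.

Section Defs.
Variable R : realType.

Definition bilinear_map (U W : lmodType R) (f : U -> U -> W) : Prop :=
  (forall a x y z, f (a *: x + y) z = a *: f x z + f y z) /\
  (forall a x y z, f z (a *: x + y) = a *: f z x + f z y).

Definition trilinear_map (U : lmodType R) (f : U -> U -> U -> U) : Prop :=
  (forall a x y z s, f (a *: x + y) z s = a *: f x z s + f y z s) /\
  (forall a x y z s, f z (a *: x + y) s = a *: f z x s + f z y s) /\
  (forall a x y z s, f z s (a *: x + y) = a *: f z s x + f z s y).

Definition nondeg_sym_form (U : lmodType R) (b : U -> U -> R) : Prop :=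
  [/\ (forall a x y z, b (a *: x + y) z = a * b x z + b y z),
      (forall x y, b x y = b y x)
    & (forall x, (forall y, b x y = 0) -> x = 0)].

Definition lie_algebra (g : lmodType R) (br : g -> g -> g) : Prop :=
  [/\ bilinear_map br,
      (forall x, br x x = 0)
    & (forall x y z, br x (br y z) + br y (br z x) + br z (br x y) = 0)].

Definition metric_lie_algebra (g : lmodType R) (br : g -> g -> g)
    (B : g -> g -> R) : Prop :=
  [/\ lie_algebra br, nondeg_sym_form B
    & (forall x y z, B (br x y) z + B y (br x z) = 0)].

(* orthogonal representation rho : g -> so(V, ip), x . v = rho x v *)
Definition orthogonal_rep (g V : lmodType R) (br : g -> g -> g)
    (ip : V -> V -> R) (rho : g -> V -> V) : Prop :=
  [/\ nondeg_sym_form ip,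
      (forall a x y v, rho (a *: x + y) v = a *: rho x v + rho y v),
      (forall x a u v, rho x (a *: u + v) = a *: rho x u + rho x v),
      (forall x y v, rho (br x y) v = rho x (rho y v) - rho y (rho x v))
    & (forall x u v, ip (rho x u) v + ip u (rho x v) = 0)].

Definition metric_3Leibniz (V : lmodType R) (ip : V -> V -> R)
    (br3 : V -> V -> V -> V) : Prop :=
  [/\ nondeg_sym_form ip,
      trilinear_map br3,
      (forall x y z s t, br3 x y (br3 z s t) =
          br3 (br3 x y z) s t + br3 z (br3 x y s) t + br3 z s (br3 x y t)),
      (forall x y z s, ip (br3 x y z) s + ip z (br3 x y s) = 0)
    & (forall x y z s, ip (br3 x y z) s = ip (br3 z s x) y)].

End Defs.

(* The map T is the transpose of the action, so ad-invariance of (-,-) and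
   orthogonality of the action make it g-equivariant:
   [x, T(z,s)] = T(x.z, s) + T(z, x.s).  Applying the representation to this
   identity, [T(x,y), T(z,s)] acts as the commutator of the actions of T(x,y)
   and T(z,s), which is the fundamental identity.  Unitarity is orthogonality
   of the action, and symmetry is symmetry of (-,-):
   <T(x,y).z, s> = (T(z,s), T(x,y)) = <T(z,s).x, y>. *)
From HB Require Import structures.
From mathcomp Require Import all_boot all_order all_algebra.
From mathcomp Require Import reals.
Set Implicit Arguments.
Unset Strict Implicit.
Import GRing.Theory.
Local Open Scope ring_scope.

Section NondegForm.
Variables (R : realType) (U : lmodType R) (b : U -> U -> R).
Hypothesis hb : nondeg_sym_form b.

Lemma formDl x y z : b (x + y) z = b x z + b y z.
Proof. by case: hb => linb _ _; rewrite -{1}(scale1r x) linb mul1r. Qed.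

Lemma form0l z : b 0 z = 0.
Proof. by apply: (addrI (b 0 z)); rewrite -formDl !addr0. Qed.

Lemma formZl a x z : b (a *: x) z = a * b x z.
Proof.
by case: hb => linb _ _; rewrite -[a *: x]addr0 linb form0l addr0.
Qed.

Lemma formBl x y z : b (x - y) z = b x z - b y z.
Proof. by rewrite formDl -scaleN1r formZl mulN1r. Qed.

Lemma formDr x y z : b z (x + y) = b z x + b z y.
Proof. by case: hb => _ symb _; rewrite symb formDl (symb x) (symb y). Qed.

Lemma formZr a x z : b z (a *: x) = a * b z x.
Proof. by case: hb => _ symb _; rewrite symb formZl symb. Qed.

Lemma form_inj p q : (forall y, b p y = b q y) -> p = q.
Proof.
case: hb => _ _ nondeg bpq; apply/eqP; rewrite -subr_eq0; apply/eqP.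
by apply: nondeg => y; rewrite formBl bpq subrr.
Qed.

End NondegForm.

Section TransposedAction.
Variables (R : realType) (g V : lmodType R).
Variables (br : g -> g -> g) (B : g -> g -> R).
Variables (ip : V -> V -> R) (rho : g -> V -> V) (T : V -> V -> g).
Hypothesis hB : metric_lie_algebra br B.
Hypothesis hrho : orthogonal_rep br ip rho.
Hypothesis hT : forall u v x, B (T u v) x = ip (rho x u) v.

Let B_nondeg : nondeg_sym_form B. Proof. by case: hB. Qed.

Lemma T_linear_l a u u' v : T (a *: u + u') v = a *: T u v + T u' v.
Proof.
case: hrho => hip _ rho_linr _ _; apply: (form_inj B_nondeg) => x.
by rewrite hT (formDl B_nondeg) formZl // !hT rho_linr formDl // formZl.
Qed.

Lemma T_linear_r a u v v' : T u (a *: v + v') = a *: T u v + T u v'.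
Proof.
case: hrho => hip _ _ _ _; apply: (form_inj B_nondeg) => x.
by rewrite hT (formDl B_nondeg) formZl // !hT formDr // formZr.
Qed.

Lemma br_T x u v : br x (T u v) = T (rho x u) v + T u (rho x v).
Proof.
case: hB => _ _ B_inv; case: hrho => hip _ _ rho_br rho_orth.
apply: (form_inj B_nondeg) => y.
move/eqP: (B_inv x (T u v) y); rewrite addr_eq0 => /eqP ->.
rewrite (formDl B_nondeg) !hT rho_br formBl //.
by move/eqP: (rho_orth x (rho y u) v); rewrite addr_eq0 => /eqP ->; rewrite opprB opprK.
Qed.

Lemma rho_T_fundamental x y z s t :
  rho (T x y) (rho (T z s) t) =
  rho (T (rho (T x y) z) s) t + rho (T z (rho (T x y) s)) t
    + rho (T z s) (rho (T x y) t).
Proof.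
case: hrho => _ rho_linl _ rho_br _.
have rhoDl w w' v : rho (w + w') v = rho w v + rho w' v.
  by rewrite -{1}(scale1r w) rho_linl scale1r.
rewrite -!rhoDl -br_T.
by move/eqP: (rho_br (T x y) (T z s) t); rewrite eq_sym subr_eq addrC => /eqP.
Qed.

Lemma ip_rho_T_sym x y z s : ip (rho (T x y) z) s = ip (rho (T z s) x) y.
Proof. by case: B_nondeg => _ symB _; rewrite -hT symB hT. Qed.

End TransposedAction.

Theorem mainTheorem15 (R : realType) (g V : vectType R)
    (br : g -> g -> g) (B : g -> g -> R)
    (ip : V -> V -> R) (rho : g -> V -> V) (T : V -> V -> g) :
  metric_lie_algebra br B ->
  orthogonal_rep br ip rho ->
  injective rho ->
  (forall u v x, B (T u v) x = ip (rho x u) v) ->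
  metric_3Leibniz ip (fun u v w => rho (T u v) w).
Proof.
move=> hB hrho _ hT; have [hip rho_linl rho_linr _ rho_orth] := hrho.
split=> //.
- split; [|split] => a x y z s /=.
  + by rewrite (T_linear_l hB hrho hT) rho_linl.
  + by rewrite (T_linear_r hB hrho hT) rho_linl.
  + by rewrite rho_linr.
- by move=> x y z s t /=; apply: (rho_T_fundamental hB hrho hT).
- exact: (ip_rho_T_sym hB hT).
Qed.
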